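(* Let $X$ be the Hirzebruch surface of degree $e\ge0$ and let $J$ be the trivial group (acting trivially on $\operatorname{Pic}(X)$). If $e$ is odd, then $\operatorname{Am}^\chi(X,J)$ is trivial. If $e$ is even, then $\operatorname{Am}^\chi(X,J)\cong(\mathbb{Z}/2\mathbb{Z})^2$.
   Context: The Hirzebruch surface of degree $e$ is a ruled surface over $\mathbb{P}^1$ with a section of self-intersection $-e$. For $J$ trivial, $\operatorname{Am}^\chi(X,J):=\operatorname{Pic}(X)/\langle\chi(D)[D]\mid [D]\in\operatorname{Pic}(X)\rangle$, where $\chi(D)$ is the Euler–Poincaré characteristic of $\mathcal{O}_X(D)$. *)

From mathcomp Require Import all_boot all_order all_algebra.
Set Implicit Arguments. Unset Strict Implicit. Unset Printing Implicit Defensive.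
Import Order.TTheory GRing.Theory Num.Theory.
Local Open Scope ring_scope.

(* Model of Pic(X) for the Hirzebruch surface X = F_e (e >= 0):
   Pic(X) is free abelian of rank 2 with basis (C, f), where C is the section
   with C^2 = -e and f is a fibre: C.f = 1, f^2 = 0.
   A class a*C + b*f is encoded as the pair (a, b) : int * int. *)
Notation HPic := (int * int)%type.

Definition hint (e : nat) (D D' : HPic) : int :=
  - (e%:Z) * D.1 * D'.1 + D.1 * D'.2 + D.2 * D'.1.

Definition hcanon (e : nat) : HPic := (-2, - (e%:Z + 2)).

(* Euler-Poincare characteristic of O_X(D), via Riemann-Roch on a rational
   surface (chi(O_X) = 1): chi(D) = 1 + D.(D - K)/2 (the numerator is even). *)
Definition hchi (e : nat) (D : HPic) : int :=
  1 + ((hint e D D - hint e (hcanon e) D) %/ 2)%Z.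

Definition in_chi_subgroup (e : nat) (v : HPic) : Prop :=
  exists (n : nat) (k : 'I_n -> int) (D : 'I_n -> HPic),
    v = \sum_(i < n) (D i *~ (k i * hchi e (D i))).

(* Am^chi(X, J) for trivial J is trivial: the subgroup is all of Pic(X). *)
Definition Am_chi_trivial (e : nat) : Prop := forall v : HPic, in_chi_subgroup e v.

(* Am^chi(X, J) = Pic(X)/H is isomorphic to the abelian group G iff there is a
   surjective group homomorphism Pic(X) -> G with kernel H. *)
Definition Am_chi_isom_to (e : nat) (G : zmodType) : Prop :=
  exists phi : HPic -> G,
    (forall x y, phi (x + y) = phi x + phi y) /\
    (forall g : G, exists x, phi x = g) /\
    (forall x, phi x = 0 <-> in_chi_subgroup e x).

From HB Require Import structures.
From mathcomp Require Import all_boot all_order all_algebra ring.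
Import GRing.Theory.
Local Open Scope ring_scope.

(* By Riemann-Roch, chi(aC + bf) = (a+1)(b+1) - e a(a+1)/2.
   For e = 2t+1 the classes C + t f and C + (t-1) f have chi = 1 and -1, so
   they lie in the subgroup H generated by the chi(D) D, and they span Pic(X).
   For e = 2m, chi(C + m f) = chi(2f) = 2 puts 2 Pic(X) inside H.  Conversely
   chi(D) = (a+1)(b+1) mod 2, so chi(D) D is divisible by 2 whenever D is not;
   hence H = 2 Pic(X) and Pic(X)/H is reduction mod 2 on both coordinates. *)

Lemma hpicMz (a b n : int) : (a, b) *~ n = (a * n, b * n) :> HPic.
Proof.
apply: injective_projections; rewrite /= -mulrzz.
  exact: (raddfMz (@fst int int)).
exact: (raddfMz (@snd int int)).
Qed.

Section FixedDegree.

Context {e : nat}.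

Lemma hchiE (a b N : int) :
  hint e (a, b) (a, b) - hint e (hcanon e) (a, b) = N * 2 ->
  hchi e (a, b) = 1 + N.
Proof. by rewrite /hchi => ->; rewrite mulzK. Qed.

Lemma hchi_fibre (b : int) : hchi e (0, b) = b + 1.
Proof. by rewrite addrC (@hchiE _ _ b) // /hint /=; ring. Qed.

Lemma hchi_section (b : int) : hchi e (1, b) = (b + 1) * 2 - e%:Z.
Proof.
rewrite (@hchiE _ _ (b * 2 - e%:Z + 1)); first by ring.
by rewrite /hint /=; ring.
Qed.

Lemma in_chi_subgroup_gen (D : HPic) : in_chi_subgroup e (D *~ hchi e D).
Proof. by exists 1%N, (fun=> 1), (fun=> D); rewrite big_ord1 mul1r. Qed.

Lemma in_chi_subgroupD {v w : HPic} :
  in_chi_subgroup e v -> in_chi_subgroup e w -> in_chi_subgroup e (v + w).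
Proof.
move=> [n [k [D ->]]] [n' [k' [D' ->]]].
exists (n + n')%N, (fun i => match split i with inl j => k j | inr j => k' j end).
exists (fun i => match split i with inl j => D j | inr j => D' j end).
rewrite big_split_ord; congr (_ + _); apply: eq_bigr => j _.
  by rewrite (unsplitK (inl j)).
by rewrite (unsplitK (inr j)).
Qed.

Lemma in_chi_subgroupMz (v : HPic) (z : int) :
  in_chi_subgroup e v -> in_chi_subgroup e (v *~ z).
Proof.
move=> [n [k [D ->]]]; exists n, (fun i => z * k i), D.
by rewrite mulrz_suml; apply: eq_bigr => i _; rewrite -mulrzA mulrC mulrA.
Qed.

Lemma in_chi_subgroup_lincomb {v w : HPic} (a b : int) :
  in_chi_subgroup e v -> in_chi_subgroup e w ->
  in_chi_subgroup e (v *~ a + w *~ b).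
Proof. by move=> Hv Hw; apply: in_chi_subgroupD; apply: in_chi_subgroupMz. Qed.

End FixedDegree.

Lemma hchi_even (m : nat) (a b : int) :
  hchi m.*2 (a, b) = (a + 1) * (b + 1) - m%:Z * (a * (a + 1)).
Proof.
rewrite (@hchiE _ _ _ ((a + 1) * (b + 1) - 1 - m%:Z * (a * (a + 1)))); first by ring.
by rewrite /hint /= -muln2 PoszM; ring.
Qed.

Lemma in_chi_subgroup_odd (t : nat) (v : HPic) : in_chi_subgroup t.*2.+1 v.
Proof.
have chi_sec (b : int) : hchi t.*2.+1 (1, b) = (b - t%:Z) * 2 + 1.
  by rewrite hchi_section -muln2 intS PoszM; ring.
have Hsec : in_chi_subgroup t.*2.+1 (1, t%:Z).
  have := in_chi_subgroup_gen (e := t.*2.+1) (1, t%:Z).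
  by rewrite chi_sec subrr mul0r add0r mulr1z.
have Hsec_neg := in_chi_subgroup_gen (e := t.*2.+1) (1, t%:Z - 1).
have Hfib : in_chi_subgroup t.*2.+1 (0, 1).
  have -> : (0, 1) = (1, t%:Z) + (1, t%:Z - 1) *~ hchi t.*2.+1 (1, t%:Z - 1) :> HPic.
    by rewrite chi_sec hpicMz; apply/pair_equal_spec; split=> /=; ring.
  exact: in_chi_subgroupD.
have -> : v = (1, t%:Z) *~ v.1 + (0, 1) *~ (v.2 - v.1 * t%:Z).
  by case: v => x y; rewrite !hpicMz; apply/pair_equal_spec; split=> /=; ring.
exact: in_chi_subgroup_lincomb.
Qed.

Definition pic_mod2 (v : HPic) : 'Z_2 * 'Z_2 := (v.1%:~R, v.2%:~R).

Lemma pic_mod2_is_zmod_morphism : zmod_morphism pic_mod2.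
Proof. by move=> [a b] [c d]; rewrite /pic_mod2 /= !rmorphB. Qed.

HB.instance Definition _ := GRing.isZmodMorphism.Build HPic ('Z_2 * 'Z_2)%type
  pic_mod2 pic_mod2_is_zmod_morphism.

Lemma pic_mod2_surj (g : 'Z_2 * 'Z_2) : exists v, pic_mod2 v = g.
Proof.
by case: g => x y; exists ((x : nat)%:Z, (y : nat)%:Z); rewrite /pic_mod2 /= -!pmulrn !natr_Zp.
Qed.

Lemma Z2_pchar : 2%N \in [pchar 'Z_2].
Proof. by []. Qed.

Lemma pic_mod2_eq0 (a b : int) :
  pic_mod2 (a, b) = 0 <-> (2 %| a)%Z /\ (2 %| b)%Z.
Proof.
rewrite !(dvdz_pcharf Z2_pchar).
by split=> [/pair_equal_spec [/eqP ? /eqP ?] | [/eqP ? /eqP ?]]; [split | apply/pair_equal_spec].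
Qed.

Lemma Z2_mulS (x : 'Z_2) : x * (x + 1) = 0.
Proof. by case: x => [[|[|m]] Hm] //; apply/val_inj. Qed.

Lemma hchi_even_mod2 (m : nat) (a b : int) :
  (hchi m.*2 (a, b))%:~R = (a%:~R + 1) * (b%:~R + 1) :> 'Z_2.
Proof.
by rewrite hchi_even !(rmorphB, rmorphM, rmorphD, rmorph1) Z2_mulS mulr0 subr0.
Qed.

Lemma pic_mod2_chi_even (m : nat) (D : HPic) (k : int) :
  pic_mod2 (D *~ (k * hchi m.*2 D)) = 0.
Proof.
case: D => a b; rewrite hpicMz /pic_mod2 /= !intrM hchi_even_mod2.
set x : 'Z_2 := a%:~R; set y : 'Z_2 := b%:~R.
apply/pair_equal_spec; split; rewrite mulrCA.
  by rewrite [x * _]mulrA Z2_mulS mul0r mulr0.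
by rewrite [y * _]mulrCA Z2_mulS !mulr0.
Qed.

Lemma in_chi_subgroup_even (m : nat) (v : HPic) :
  in_chi_subgroup m.*2 v <-> pic_mod2 v = 0.
Proof.
split=> [[n [k [D ->]]] | ].
  by rewrite raddf_sum big1 // => i _; apply: pic_mod2_chi_even.
case: v => a b /pic_mod2_eq0 [/dvdzP [p ->] /dvdzP [q ->]].
have chi_sec : hchi m.*2 (1, m%:Z) = 2 by rewrite hchi_section -muln2 PoszM; ring.
have chi_fib : hchi m.*2 (0, 1) = 2 by rewrite hchi_fibre.
have Hsec := in_chi_subgroup_gen (e := m.*2) (1, m%:Z); rewrite chi_sec in Hsec.
have Hfib := in_chi_subgroup_gen (e := m.*2) (0, 1); rewrite chi_fib in Hfib.
have -> : (p * 2, q * 2) = (1, m%:Z) *~ 2 *~ p + (0, 1) *~ 2 *~ (q - p * m%:Z) :> HPic.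
  by rewrite !hpicMz; apply/pair_equal_spec; split=> /=; ring.
exact: in_chi_subgroup_lincomb.
Qed.

Theorem proposition7p1 (e : nat) :
  (odd e -> Am_chi_trivial e) /\
  (~~ odd e -> Am_chi_isom_to e ('Z_2 * 'Z_2)%type).
Proof.
have e_half : e = ((e./2).*2 + odd e)%N by rewrite addnC odd_double_half.
split=> [e_odd v | e_even].
  by rewrite e_half e_odd addn1; apply: in_chi_subgroup_odd.
exists pic_mod2; split; first exact: raddfD.
split; first exact: pic_mod2_surj.
by move=> v; rewrite e_half (negbTE e_even) addn0 in_chi_subgroup_even.
Qed.
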